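(* Let $X$ and $Y$ be two arbitrary nonnegative random variables and assume that $\mathbb{P}(Y\le\delta)=0$ for some $\delta>0$. Then, for any $y$ that satisfies $\mathbb{P}(Y<y)>0$, $$\mathbb{P}(Y<y)\cdot\mathbb{E}\left[\frac XY\;\middle|\;Y<y\right]\le\frac1{\delta^2}\cdot\mathbb{P}(Y<y)+\int_{1/\delta^2}^\infty\mathbb{P}(X\ge\sqrt x)\,\mathrm{d}x.$$ *)

From HB Require Import structures.
From mathcomp Require Import all_boot all_order all_algebra.
From mathcomp Require Import all_classical all_reals all_analysis.
Set Implicit Arguments. Unset Strict Implicit. Unset Printing Implicit Defensive.
Import Order.TTheory GRing.Theory Num.Theory.
Local Open Scope classical_set_scope.
Local Open Scope ring_scope.
Local Open Scope ereal_scope.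

Definition cond_expectation_event d (T : measurableType d) (R : realType)
  (P : probability T R) (A : set T) (f : T -> R) : \bar R :=
  (\int[P]_(w in A) (f w)%:E) * ((fine (P A))^-1)%:E.

From HB Require Import structures.
From mathcomp Require Import all_boot all_order all_algebra.
From mathcomp Require Import all_classical all_reals all_analysis.
From mathcomp Require Import lra.
Import Order.TTheory GRing.Theory Num.Theory.
Import measurable_realfun.
Local Open Scope classical_set_scope.
Local Open Scope ring_scope.
Local Open Scope ereal_scope.

(* Since Y > delta almost surely, X / Y <= X e on A = {Y < y}, where e = 1 / delta.
   With c = e^2, the elementary bound x e <= max(x^2, c) gives pointwise
     X e 1_A + c 1_{c < X^2} <= c 1_A + X^2 1_{c < X^2},
   and the layer-cake formula evaluates the expectation of the last term as
   c P(c < X^2) + int_c^oo P(r < X^2) dr.  Cancelling the finite mass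
   c P(c < X^2) and using {r < X^2} <= {sqrt r <= X} gives the claim. *)

Lemma measurable_invr {R : realType} : measurable_fun [set: R] (@GRing.inv R).
Proof.
rewrite -(setUCr [set 0%R]); apply/measurable_funU => //; first exact: measurableC.
split.
- have inv0 : {in [set 0%R], cst 0%R =1 @GRing.inv R}.
    by move=> x; rewrite inE /= => ->; rewrite invr0.
  exact: eq_measurable_fun inv0 (measurable_cst _).
- apply: open_continuous_measurable_fun.
    exact/closed_openC/accessible_closed_set1/hausdorff_accessible/norm_hausdorff.
  by move=> x; rewrite inE /= => /eqP; exact: inv_continuous.
Qed.

Section measurable_comparison.
Context {d} {T : measurableType d} {R : realType} {f g : T -> R}.
Hypotheses (mf : measurable_fun setT f) (mg : measurable_fun setT g).

Lemma measurable_ltr_set : measurable [set w | (f w < g w)%R].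
Proof. by rewrite -[X in measurable X]setTI; exact: measurable_fun_ltr. Qed.

Lemma measurable_ler_set : measurable [set w | (f w <= g w)%R].
Proof. by rewrite -[X in measurable X]setTI; exact: measurable_fun_ler. Qed.

End measurable_comparison.

Lemma mul_cond_expectation_event {d} {T : measurableType d} {R : realType}
    (P : probability T R) (A : set T) (f : T -> R) :
  measurable A -> 0 < P A ->
  P A * cond_expectation_event P A f = \int[P]_(w in A) (f w)%:E.
Proof.
move=> mA PA_gt0; have PA_fin : P A \is a fin_num by exact: fin_num_measure.
have fPA_gt0 : (0 < fine (P A))%R by rewrite fine_gt0 // PA_gt0 ltey_eq PA_fin.
rewrite /cond_expectation_event -{1}(fineK PA_fin) muleCA -EFinM.
by rewrite mulfV ?gt_eqF // mule1.
Qed.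

Lemma integral_divr_le_ae {d} {T : measurableType d} {R : realType}
    (mu : {measure set T -> \bar R}) {D : set T} {f g : T -> R} {a : R} :
  measurable D -> measurable_fun setT f -> measurable_fun setT g ->
  (forall w, 0 <= f w)%R -> (forall w, 0 <= g w)%R ->
  (0 < a)%R -> mu [set w | (g w <= a)%R] = 0 ->
  \int[mu]_(w in D) (f w / g w)%:E <= \int[mu]_(w in D) (f w / a)%:E.
Proof.
move=> mD mf mg f_ge0 g_ge0 a_gt0 g_gt_a_ae.
apply: ae_ge0_le_integral => //.
- by move=> w _; rewrite lee_fin divr_ge0.
- apply/measurable_EFinP/measurable_funTS/measurable_funM => //.
  exact: measurableT_comp measurable_invr mg.
- by move=> w _; rewrite lee_fin divr_ge0 // ltW.
- exact/measurable_EFinP/measurable_funTS/measurable_funM.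
exists [set w | (g w <= a)%R]; split => //; first exact: measurable_ler_set.
move=> w /= fg_gt; rewrite leNgt; apply/negP => a_lt_g; apply: fg_gt => _.
by rewrite lee_fin ler_wpM2l // lef_pV2 ?posrE ?ltW // (lt_trans a_gt0).
Qed.

Lemma measurable_measure_antitone {d} {T : measurableType d} {R : realType}
    (mu : {finite_measure set T -> \bar R}) (F : R -> set T) :
  (forall r, measurable (F r)) -> (forall r s, (r <= s)%R -> F s `<=` F r) ->
  measurable_fun setT (fun r => mu (F r)).
Proof.
move=> mF F_anti.
have -> : (fun r => mu (F r)) = EFin \o (fun r => fine (mu (F r))).
  by apply/funext => r /=; rewrite fineK // fin_num_measure.
apply/measurable_EFinP; apply: nonincreasing_measurable => // r s rs.
rewrite fine_le ?fin_num_measure //.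
by apply: le_measure; [rewrite inE .. | exact: F_anti].
Qed.

Section tail_expectation.
Context {d} {T : measurableType d} {R : realType} (P : probability T R).
Context {V : T -> R} {c : R}.
Hypotheses (mV : measurable_fun setT V) (c_ge0 : (0 <= c)%R).

Let Z (w : T) : R := if (c < V w)%R then V w else 0%R.

Let mZ : measurable_fun setT Z.
Proof. exact: measurable_fun_ifT (measurable_fun_ltr _ _) mV (measurable_cst _). Qed.

HB.instance Definition _ := isMeasurableFun.Build d _ T R Z mZ.

Let ccdfZ_lt r :
  (0 <= r < c)%R -> ccdf (Z : {RV P >-> R}) r = P [set w | (c < V w)%R].
Proof.
move=> /andP[r_ge0 r_lt_c]; congr (P _); apply/seteqP; split => w /=;
  rewrite /Z in_itv /= andbT.
- by case: ifP => // _; rewrite ltNge r_ge0.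
- by move=> c_lt_V; rewrite c_lt_V (lt_trans r_lt_c).
Qed.

Let ccdfZ_ge r :
  (c <= r)%R -> ccdf (Z : {RV P >-> R}) r = P [set w | (r < V w)%R].
Proof.
move=> c_le_r; congr (P _); apply/seteqP; split => w /=;
  rewrite /Z in_itv /= andbT.
- by case: ifP => // _; rewrite ltNge (le_trans c_ge0 c_le_r).
- by move=> r_lt_V; rewrite (le_lt_trans c_le_r r_lt_V).
Qed.

Lemma expectation_tail : 'E_P[Z] =
  c%:E * P [set w | (c < V w)%R] +
  \int[lebesgue_measure]_(r in `[c, +oo[) P [set w | (r < V w)%R].
Proof.
have Z_ge0 w : (0 <= Z w)%R.
  by rewrite /Z; case: ifP => // /ltW; exact: le_trans.
rewrite (ge0_expectation_ccdf Z_ge0).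
rewrite (@itv_bndbnd_setU _ _ (BLeft 0%R) (BLeft c) (BInfty _ false)) //.
rewrite ge0_integral_setU //=; last 2 first.
- exact: measurable_funS (ccdf_measurable _).
- apply/disj_setPS => r; rewrite /= !in_itv /= => -[/andP[_ r_lt_c] /andP[c_le_r _]].
  by move: (lt_le_trans r_lt_c c_le_r); rewrite ltxx.
congr (_ + _).
- rewrite (eq_integral (cst (P [set w | (c < V w)%R]))); last first.
    by move=> r; rewrite inE /= in_itv /= => /ccdfZ_lt.
  rewrite integral_cst //= lebesgue_measure_itv /= lte_fin.
  have [c_gt0|c_le0] := ltP 0%R c; first by rewrite oppr0 adde0 muleC.
  have -> : c = 0%R by apply/le_anti; rewrite c_le0 c_ge0.
  by rewrite mul0e mule0.
- apply: eq_integral => r; rewrite inE /= in_itv /= andbT; exact: ccdfZ_ge.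
Qed.

End tail_expectation.

Lemma mulr_le_max_sqr {R : realDomainType} {x e : R} :
  (0 <= x)%R -> (0 <= e)%R -> (x * e <= Num.max (x ^+ 2) (e ^+ 2))%R.
Proof.
move=> x_ge0 e_ge0; rewrite le_max !expr2.
by case: (leP x e) => [x_le_e|e_lt_x]; apply/orP; [right|left];
  [rewrite ler_wpM2r | rewrite ler_wpM2l // ltW].
Qed.

Section integral_mulr_le_tail.
Context {d} {T : measurableType d} {R : realType} (P : probability T R).
Context {f : T -> R} {e : R} {A : set T}.
Hypotheses (mf : measurable_fun setT f) (f_ge0 : forall w, (0 <= f w)%R).
Hypotheses (e_gt0 : (0 < e)%R) (mA : measurable A).

Let c := (e ^+ 2)%R.
Let B := [set w | (c < f w ^+ 2)%R].
Let Z (w : T) : R := if (c < f w ^+ 2)%R then (f w ^+ 2)%R else 0%R.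

Let pointwise_bound w :
  ((fun w => (f w * e)%:E) \_ A) w + (c * \1_B w)%R%:E <=
  (c * \1_A w)%R%:E + (Z w)%:E.
Proof.
have := mulr_le_max_sqr (f_ge0 w) (ltW e_gt0).
have inB : (w \in B) = (c < f w ^+ 2)%R by apply/idP/idP; rewrite inE.
rewrite patchE !indicE inB /Z -/c.
case: (w \in A); case: ltP => [c_lt_f2|f2_le_c];
  rewrite ?(max_idPl (ltW c_lt_f2)) ?(max_idPr f2_le_c) /= ?mulr1 ?mulr0;
  rewrite -?EFinD lee_fin; lra.
Qed.

Lemma integral_mulr_le_tail :
  \int[P]_(w in A) (f w * e)%:E <=
  (e ^+ 2)%:E * P A +
  \int[lebesgue_measure]_(r in `[(e ^+ 2)%R, +oo[) P [set w | (r < f w ^+ 2)%R].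
Proof.
have c_ge0 : (0 <= c)%R by exact: sqr_ge0.
have mf2 : measurable_fun setT (fun w => f w ^+ 2)%R by exact: measurable_funX.
have mB : measurable B by exact: measurable_ltr_set.
have mind (D : set T) :
    measurable D -> measurable_fun setT (fun w => (c * \1_D w)%R%:E).
  by move=> mD; apply/measurable_EFinP/measurable_funM => //; exact: measurable_indic.
have [mindA mindB] := (mind A mA, mind B mB).
have ind_ge0 (D : set T) w : 0 <= (c * \1_D w)%R%:E by rewrite lee_fin mulr_ge0.
have integral_ind (D : set T) :
    measurable D -> \int[P]_w (c * \1_D w)%R%:E = c%:E * P D.
  move=> mD; under eq_integral do rewrite EFinM.
  rewrite ge0_integralZl_EFin //; first by rewrite integral_indic // setIT.
  exact/measurable_EFinP/measurable_indic.
have Z_ge0 w : 0 <= (Z w)%:E.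
  by rewrite lee_fin /Z; case: ifP => // _; exact: sqr_ge0.
have mZ : measurable_fun setT (fun w => (Z w)%:E).
  by apply/measurable_EFinP/measurable_fun_ifT => //; exact: measurable_fun_ltr.
have mfeA : measurable_fun setT ((fun w => (f w * e)%:E) \_ A).
  apply/(measurable_restrictT _ mA)/measurable_funTS/measurable_EFinP.
  exact: measurable_funM.
have feA_ge0 w : 0 <= ((fun w => (f w * e)%:E) \_ A) w.
  by rewrite patchE; case: ifP => // _; rewrite lee_fin mulr_ge0 // ltW.
have integrated_bound :
    \int[P]_(w in A) (f w * e)%:E + c%:E * P B <= c%:E * P A + 'E_P[Z].
  rewrite integral_mkcond -!integral_ind // expectation.unlock.
  rewrite -!ge0_integralD //.
  apply: (ge0_le_integral P measurableT _ _ _ (fun w _ => pointwise_bound w)).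
  - by move=> w _; rewrite adde_ge0.
  - exact: emeasurable_funD.
  - exact: emeasurable_funD.
have cPB_fin : c%:E * P B \is a fin_num by rewrite fin_numM // fin_num_measure.
by move: integrated_bound; rewrite expectation_tail // addeCA [leRHS]addeC leeD2rE.
Qed.
End integral_mulr_le_tail.

Lemma integral_tail_sqr_le_sqrt {d} {T : measurableType d} {R : realType}
    (P : probability T R) (f : T -> R) (c : R) :
  measurable_fun setT f -> (forall w, 0 <= f w)%R -> (0 <= c)%R ->
  \int[lebesgue_measure]_(r in `[c, +oo[) P [set w | (r < f w ^+ 2)%R] <=
  \int[lebesgue_measure]_(r in `[c, +oo[) P [set w | (Num.sqrt r <= f w)%R].
Proof.
move=> mf f_ge0 c_ge0.
have mlt : measurable_fun setT (fun r : R => P [set w | (r < f w ^+ 2)%R]).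
  apply: measurable_measure_antitone => [r|r s r_le_s w /=].
    by apply: measurable_ltr_set => //; exact: measurable_funX.
  exact: le_lt_trans.
have mle : measurable_fun setT (fun r : R => P [set w | (Num.sqrt r <= f w)%R]).
  apply: measurable_measure_antitone => [r|r s r_le_s w /=].
    exact: measurable_ler_set.
  by apply: le_trans; rewrite ler_wsqrtr.
apply: ge0_le_integral => //.
- exact: measurable_funTS mlt.
- exact: measurable_funTS mle.
- move=> r; rewrite /= in_itv /= andbT => c_le_r.
  apply: le_measure; rewrite ?inE.
  + exact: measurable_ltr_set (measurable_funX _ mf).
  + exact: measurable_ler_set.
  + move=> w /= r_lt_f2; rewrite -(ger0_norm (f_ge0 w)) -sqrtr_sqr.
    by rewrite ler_sqrt ?ltW // (le_lt_trans (le_trans c_ge0 c_le_r)).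
Qed.

Theorem lemma4 (d : measure_display) (T : measurableType d) (R : realType)
  (P : probability T R) (X Y : {RV P >-> R})
  (hX : forall w, (0 <= X w)%R) (hY : forall w, (0 <= Y w)%R)
  (delta : R) (hdelta : (0 < delta)%R)
  (hYdelta : P [set w | (Y w <= delta)%R] = 0)
  (y : R) (hy : 0 < P [set w | (Y w < y)%R]) :
  P [set w | (Y w < y)%R] *
    cond_expectation_event P [set w | (Y w < y)%R] (fun w => (X w / Y w)%R)
  <= ((delta ^- 2)%:E * P [set w | (Y w < y)%R]
      + \int[lebesgue_measure]_(x in `[(delta ^- 2)%R, +oo[)
          P [set w | (Num.sqrt x <= X w)%R]).
Proof.
have [mX mY] : measurable_fun setT X /\ measurable_fun setT Y.
  by split; exact: measurable_funPT.
have mA : measurable [set w | (Y w < y)%R] by exact: measurable_ltr_set.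
rewrite mul_cond_expectation_event //.
apply: le_trans (integral_divr_le_ae P mA mX mY hX hY hdelta hYdelta) _.
rewrite -exprVn; apply: le_trans (integral_mulr_le_tail P mX hX _ mA) _.
  by rewrite invr_gt0.
by rewrite leeD2l // integral_tail_sqr_le_sqrt // sqr_ge0.
Qed.
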